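(* Let $a<b$ be real, $Z\subseteq\mathbb{R}^n\times\mathbb{R}^m$ permutation-invariant with respect to $x$, and $\mathcal{F}=\{F_1,\dots,F_r\}$ a permutation-invariant collection of faces of $[a,b]^n$. Let $I=\{i\in\{1,\dots,r\}\mid$ there exist integers $0\le p<q\le n+1$ with $u(F_i)=\{1,\dots,p\}$ and $l(F_i)=\{q,\dots,n\}\}$ (where $\{1,\dots,0\}$ and $\{n+1,\dots,n\}$ denote the empty set). Then $$\mathrm{conv}(X(Z,a,b,\mathcal{F}))=\Big\{(x,z)\ \Big|\ \exists u:\ (u,z)\in\mathrm{conv}\Big(\bigcup_{i\in I}X(Z,a,b,\{F_i\})\Big),\ u_1\ge\dots\ge u_n,\ u\ge_m x\Big\}.$$
   Context: $Z$ is permutation-invariant with respect to $x$ if $(x,z)\in Z$ implies $(Qx,z)\in Z$ for every permutation matrix $Q$. For a collection $\mathcal{F}'=\{F'_1,\dots,F'_s\}$ of faces of $[a,b]^n$, $X(Z,a,b,\mathcal{F}')=\{(x,z)\in[a,b]^n\times\mathbb{R}^m\mid(x,z)\in Z,\ x\in\bigcup_{i=1}^s F'_i\}$. For a face $F$ of $[a,b]^n$, $l(F)=\{j\mid\hat x_j=a\ \forall\hat x\in F\}$ and $u(F)=\{j\mid\hat x_j=b\ \forall\hat x\in F\}$. A collection of faces is permutation-invariant if, for each face $F$ in it and each permutation matrix $Q$, the face $\{Qx\mid x\in F\}$ is also in it. $x\ge_m y$ means $\sum_{i=1}^j x_{[i]}\ge\sum_{i=1}^j y_{[i]}$ for $j<n$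 with equality for $j=n$ ($x_{[i]}$ the $i$-th largest entry). *)

From HB Require Import structures.
From mathcomp Require Import all_boot all_order all_algebra all_fingroup.
Set Implicit Arguments. Unset Strict Implicit. Unset Printing Implicit Defensive.
Import Order.TTheory GRing.Theory Num.Theory.
Local Open Scope ring_scope.

Section Defs.
Variable R : realFieldType.

Definition conv (V : lmodType R) (S : V -> Prop) : V -> Prop :=
  fun y => exists (k : nat) (lam : 'I_k -> R) (pts : 'I_k -> V),
    [/\ forall i, 0 <= lam i,
        \sum_(i < k) lam i = 1,
        forall i, S (pts i) &
        y = \sum_(i < k) lam i *: pts i].

Definition box (n : nat) (a b : R) : 'cV[R]_n -> Prop :=
  fun x => forall j : 'I_n, a <= x j 0 <= b.

(* F is a face of the polytope [a,b]^n: the intersection of the box with a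
   hyperplane c^T x = d such that c^T x <= d is valid on the box
   (this includes the empty face and the whole box). *)
Definition is_face (n : nat) (a b : R) (F : 'cV[R]_n -> Prop) : Prop :=
  exists (c : 'cV[R]_n) (d : R),
    (forall x, box a b x -> (c^T *m x) 0 0 <= d) /\
    (forall x, F x <-> (box a b x /\ (c^T *m x) 0 0 = d)).

Definition perm_inv_Z (n m : nat) (Z : 'cV[R]_n * 'cV[R]_m -> Prop) : Prop :=
  forall (x : 'cV[R]_n) (z : 'cV[R]_m) (Q : 'M[R]_n),
    is_perm_mx Q -> Z (x, z) -> Z (Q *m x, z).

Definition perm_inv_faces (n r : nat) (Fs : 'I_r -> ('cV[R]_n -> Prop)) : Prop :=
  forall (i : 'I_r) (Q : 'M[R]_n), is_perm_mx Q ->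
    exists j : 'I_r, forall y, Fs j y <-> exists x, Fs i x /\ y = Q *m x.

Definition Xset (n m s : nat) (Z : 'cV[R]_n * 'cV[R]_m -> Prop) (a b : R)
    (Fs : 'I_s -> ('cV[R]_n -> Prop)) : 'cV[R]_n * 'cV[R]_m -> Prop :=
  fun p => [/\ box a b p.1, Z p & exists i : 'I_s, Fs i p.1].

Definition lset (n : nat) (a : R) (F : 'cV[R]_n -> Prop) (j : 'I_n) : Prop :=
  forall x, F x -> x j 0 = a.
Definition uset (n : nat) (b : R) (F : 'cV[R]_n -> Prop) (j : 'I_n) : Prop :=
  forall x, F x -> x j 0 = b.

(* The index condition defining I: there are integers 0 <= p < q <= n+1 with
   u(F) = {1..p} and l(F) = {q..n} (1-based coordinates; coordinate j : 'I_n
   is the (j+1)-th). *)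
Definition in_I (n : nat) (a b : R) (F : 'cV[R]_n -> Prop) : Prop :=
  exists p q : nat, (p < q)%N /\ (q <= n.+1)%N /\
    (forall j : 'I_n, uset b F j <-> (j.+1 <= p)%N) /\
    (forall j : 'I_n, lset a F j <-> (q <= j.+1)%N).

Definition sorted_desc (n : nat) (x : 'cV[R]_n) : seq R :=
  sort (fun s t : R => t <= s) [seq x i 0 | i <- enum 'I_n].

Definition topsum (n : nat) (x : 'cV[R]_n) (j : nat) : R :=
  \sum_(i < j) nth 0 (sorted_desc x) i.

Definition majorizes (n : nat) (x y : 'cV[R]_n) : Prop :=
  (forall j : nat, (j < n)%N -> topsum y j <= topsum x j) /\
  topsum x n = topsum y n.

Definition nonincreasing_vec (n : nat) (u : 'cV[R]_n) : Prop :=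
  forall i j : 'I_n, (i <= j)%N -> u j 0 <= u i 0.

End Defs.

From HB Require Import structures.
From mathcomp Require Import all_boot all_order all_algebra all_fingroup.
From Stdlib Require Import ClassicalDescription.
From mathcomp Require Import ring lra zify.
Set Implicit Arguments. Unset Strict Implicit. Unset Printing Implicit Defensive.
Import Order.TTheory GRing.Theory Num.Theory.
Local Open Scope ring_scope.

(* A point of X(Z,a,b,F) can be rearranged so that the coordinates fixed at b come
   first, those fixed at a come last and the whole vector is nonincreasing; by the
   permutation invariance of Z and of the faces, the rearranged point lies in the
   I-part of X.  Since the sum of the j largest entries is convex, a convex
   combination of such sorted points majorizes the same combination of the
   original points.  Conversely, by Rado's theorem a vector majorized by a
   nonincreasing u is a convex combination of permutations of u (obtained by
   repeated Robin Hood transfers), and permuting a point of the I-part of X stays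
   in X. *)

Lemma sum_pair (R : nzRingType) (V W : lmodType R) (I : finType) (p : I -> V * W) :
  \sum_i p i = (\sum_i (p i).1, \sum_i (p i).2).
Proof.
rewrite [LHS]surjective_pairing.
by rewrite (big_morph fst (id1 := 0) (op1 := +%R)) // (big_morph snd (id1 := 0) (op1 := +%R)).
Qed.

Section ConvexHull.
Variables (R : realFieldType) (V : lmodType R).
Implicit Types (S T : V -> Prop) (y : V).

Lemma conv_sum (I : finType) S (lam : I -> R) (p : I -> V) :
  (forall i, 0 <= lam i) -> \sum_i lam i = 1 -> (forall i, S (p i)) ->
  conv S (\sum_i lam i *: p i).
Proof.
move=> lam_ge0 lam_sum1 Sp.
exists #|@predT I|, (fun j => lam (enum_val j)), (fun j => p (enum_val j)).
split=> //.
- by rewrite -lam_sum1 -(big_enum_val (A:=predT)).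
- by rewrite -(big_enum_val (A:=predT) (fun i => lam i *: p i)).
Qed.

Lemma conv_mem S y : S y -> conv S y.
Proof.
move=> Sy; exists 1%N, (fun _ => 1), (fun _ => y).
by split=> //; rewrite big_ord1 ?scale1r.
Qed.

Lemma conv_segment S p q t : S p -> S q -> 0 <= t <= 1 ->
  conv S (t *: p + (1 - t) *: q).
Proof.
move=> Sp Sq /andP[t_ge0 t_le1].
have := @conv_sum bool S (fun c => if c then t else 1 - t) (fun c => if c then p else q).
rewrite !big_bool /=; apply=> [[]||[]] //.
- by rewrite subr_ge0.
- by rewrite addrC subrK.
Qed.

Lemma conv_mono S T y : (forall v, S v -> T v) -> conv S y -> conv T y.
Proof.
move=> ST [k [lam [p [lam_ge0 lam_sum1 Sp ->]]]].
by exists k, lam, p; split=> // i; apply: ST.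
Qed.

Lemma conv_image (W : lmodType R) (f : V -> W) S (T : W -> Prop) y :
  {morph f : p q / p + q} -> (forall c, {morph f : p / c *: p}) ->
  (forall v, S v -> T (f v)) -> conv S y -> conv T (f y).
Proof.
move=> fD fZ ST [k [lam [p [lam_ge0 lam_sum1 Sp ->]]]].
have f0 : f 0 = 0 by rewrite -(scale0r 0) fZ scale0r.
exists k, lam, (fun i => f (p i)); split=> // [i|]; first exact: ST.
by rewrite (big_morph f fD f0); apply: eq_bigr => i _; rewrite fZ.
Qed.

Lemma conv_idem S y : conv (conv S) y -> conv S y.
Proof.
move=> [K [lam [p [lam_ge0 lam_sum1 convSp ->]]]].
have [k hk] := fin_all_exists convSp.
have [mu hmu] := fin_all_exists hk.
have [q hq] := fin_all_exists hmu.
pose w (ij : {i : 'I_K & 'I_(k i)}) := lam (tag ij) * mu (tag ij) (tagged ij).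
pose pt (ij : {i : 'I_K & 'I_(k i)}) := q (tag ij) (tagged ij).
have sig_sum (U : nmodType) (F : forall i, 'I_(k i) -> U) :
    \sum_(ij : {i : 'I_K & 'I_(k i)}) F (tag ij) (tagged ij)
    = \sum_(i < K) \sum_(j < k i) F i j.
  by rewrite [RHS](sig_big_dep (J := fun i => 'I_(k i)) xpredT (fun _ => xpredT)).
have -> : \sum_(i < K) lam i *: p i = \sum_ij w ij *: pt ij.
  rewrite (sig_sum _ (fun i j => (lam i * mu i j) *: q i j)).
  apply: eq_bigr => i _; have [_ _ _ ->] := hq i.
  by rewrite scaler_sumr; apply: eq_bigr => j _; rewrite scalerA.
apply: conv_sum => [[i j]|| [i j]] /=.
- by have [mu_ge0 _ _ _] := hq i; rewrite mulr_ge0.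
- rewrite (sig_sum _ (fun i j => lam i * mu i j)) -lam_sum1; apply: eq_bigr => i _.
  by have [_ mu_sum1 _ _] := hq i; rewrite -mulr_sumr mu_sum1 mulr1.
- by have [_ _ Sq _] := hq i; apply: Sq.
Qed.

End ConvexHull.

Section OrdinalPrefixes.
Variable n : nat.

Lemma card_ord_lt k : (k <= n)%N -> #|[set i : 'I_n | (i < k)%N]| = k.
Proof.
move=> le_kn; rewrite -sum1_card (eq_bigl (fun i : 'I_n => (i < k)%N)) => [|i]; last by rewrite inE.
by rewrite -(big_ord_widen n (fun _ => 1%N) le_kn) sum1_card card_ord.
Qed.

Lemma mem_downclosed (S : {set 'I_n}) :
  (forall i j : 'I_n, (i <= j)%N -> j \in S -> i \in S) ->
  forall j : 'I_n, (j \in S) = (j < #|S|)%N.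
Proof.
move=> S_down j; apply/idP/idP => [j_S | lt_jS].
  rewrite -ltnS -(card_ord_lt (ltn_ord j)) ltnS; apply: subset_leq_card.
  by apply/subsetP => i; rewrite inE ltnS => /S_down; apply.
apply: contraTT lt_jS => j_notS; rewrite -leqNgt -[X in (_ <= X)%N](card_ord_lt (ltnW (ltn_ord j))).
apply: subset_leq_card; apply/subsetP => i i_S; rewrite inE ltnNge.
by apply: contraNN j_notS => /S_down; apply.
Qed.

End OrdinalPrefixes.

Section SortedSums.
Variables (R : realFieldType) (n : nat).
Implicit Types (x y u v : 'cV[R]_n) (s t : 'S_n).

Lemma exists_sorting_perm (key : 'I_n -> R) :
  exists s : 'S_n, forall i j : 'I_n, (i <= j)%N -> key (s j) <= key (s i).
Proof.
pose geK := fun i j : 'I_n => key j <= key i.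
pose l := sort geK (enum 'I_n).
have size_l : size l = n by rewrite size_sort size_enum_ord.
have uniq_l : uniq l by rewrite sort_uniq enum_uniq.
pose f i := nth i l i.
have f_inj : injective f.
  move=> i j; rewrite /f (set_nth_default i j) ?size_l // => /eqP.
  by rewrite nth_uniq ?size_l // => /eqP /val_inj.
exists (perm f_inj) => i j le_ij; rewrite !permE /f (set_nth_default i j) ?size_l //.
have geK_trans : transitive geK by move=> ? ? ? h1 h2; apply: le_trans h2 h1.
have geK_total : total geK by move=> ? ?; apply: le_total.
apply: (sorted_leq_nth geK_trans _ i (sort_sorted geK_total _)) => //.
- by move=> ?; apply: lexx.
- by rewrite inE size_l.
- by rewrite inE size_l.
Qed.

Lemma exists_sorting_permv x : exists s, nonincreasing_vec (row_perm s x).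
Proof.
have [s s_sorts] := exists_sorting_perm (fun i => x i 0).
by exists s => i j /s_sorts; rewrite !mxE.
Qed.

Definition prefix_sum v (k : nat) : R := \sum_(i < n | (i < k)%N) v i 0.

Lemma prefix_sum_n v : prefix_sum v n = \sum_i v i 0.
Proof. by apply: eq_bigl => i; rewrite ltn_ord. Qed.

Lemma prefix_sumS v (j : 'I_n) : prefix_sum v j.+1 = prefix_sum v j + v j 0.
Proof.
rewrite /prefix_sum (bigD1 j) /= ?ltnSn // addrC; congr (_ + _).
by apply: eq_bigl => i; rewrite ltnS [in RHS]ltn_neqAle andbC.
Qed.

Lemma prefix_sum_lin (K : finType) (lam : K -> R) (w : K -> 'cV[R]_n) k :
  prefix_sum (\sum_l lam l *: w l) k = \sum_l lam l * prefix_sum (w l) k.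
Proof.
rewrite /prefix_sum; under eq_bigr do rewrite summxE.
rewrite exchange_big; apply: eq_bigr => l _ /=.
by rewrite mulr_sumr; apply: eq_bigr => i _; rewrite mxE.
Qed.

Lemma sum_row_perm s v : \sum_i row_perm s v i 0 = \sum_i v i 0.
Proof.
under eq_bigr do rewrite mxE.
by rewrite [RHS](reindex_inj (@perm_inj _ s)).
Qed.

Lemma topsum_sorted x s k : nonincreasing_vec (row_perm s x) -> (k <= n)%N ->
  topsum x k = prefix_sum (row_perm s x) k.
Proof.
move=> sorted_sx le_kn.
pose L := [seq x (s i) 0 | i <- enum 'I_n].
have perm_L : perm_eq [seq x i 0 | i <- enum 'I_n] L.
  have -> : L = [seq x i 0 | i <- map s (enum 'I_n)] by rewrite -map_comp.
  apply: perm_map.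
  apply: uniq_perm; rewrite ?enum_uniq ?(map_inj_uniq (@perm_inj _ s)) ?enum_uniq //.
  by move=> i; rewrite mem_enum; symmetry; apply/mapP; exists (s^-1 i)%g; rewrite ?mem_enum ?permKV.
have sorted_L : sorted (fun a c : R => c <= a) L.
  apply: (homo_sorted (e := fun i j : 'I_n => (i <= j)%N)).
    by move=> i j /sorted_sx; rewrite !mxE.
  by have := iota_sorted 0 n; rewrite -val_enum_ord sorted_map.
have ge_total : total (fun a c : R => c <= a) by move=> ? ?; apply: le_total.
have ge_trans : transitive (fun a c : R => c <= a) by move=> ? ? ? h1 h2; apply: le_trans h2 h1.
have ge_anti : antisymmetric (fun a c : R => c <= a).
  by move=> ? ? /andP[h1 h2]; apply/le_anti; rewrite h1 h2.
have /(perm_sortP ge_total ge_trans ge_anti) sort_eq := perm_L.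
have sorted_desc_x : sorted_desc x = L by rewrite /sorted_desc sort_eq sorted_sort.
rewrite /topsum sorted_desc_x (big_ord_widen n (fun i => nth 0 L i) le_kn).
by apply: eq_bigr => i _; rewrite /L (nth_map i) ?size_enum_ord // nth_ord_enum mxE.
Qed.

Lemma topsum_nonincreasing u k : nonincreasing_vec u -> (k <= n)%N ->
  topsum u k = prefix_sum u k.
Proof. by move=> sorted_u; rewrite -{2}(row_perm1 u); apply: topsum_sorted; rewrite row_perm1. Qed.

Lemma topsum_n x : topsum x n = \sum_i x i 0.
Proof.
have [s sorted_sx] := exists_sorting_permv x.
by rewrite (topsum_sorted sorted_sx) // prefix_sum_n sum_row_perm.
Qed.

(* Shift by the threshold [y_(#|A|-1)]: the first #|A| shifted entries are then
   nonnegative and all the others nonpositive. *)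
Lemma sum_le_prefix_sum y (A : {set 'I_n}) : nonincreasing_vec y ->
  \sum_(i in A) y i 0 <= prefix_sum y #|A|.
Proof.
move=> sorted_y.
have : (#|A| <= n)%N by rewrite -[n in (_ <= n)%N]card_ord max_card.
case cardA: #|A| => [|k'] le_kn.
  rewrite big1 => [|i]; last by rewrite (card0_eq cardA).
  by rewrite /prefix_sum big_pred0.
pose t := y (Ordinal le_kn) 0.
have above (i : 'I_n) : (i < k'.+1)%N -> t <= y i 0.
  by move=> lt_ik; apply: sorted_y; rewrite /= -ltnS.
have below (i : 'I_n) : ~~ (i < k'.+1)%N -> y i 0 <= t.
  by rewrite -leqNgt => le_ki; apply: sorted_y; apply: ltnW.
have shift (P : pred 'I_n) :
    \sum_(i | P i) y i 0 = \sum_(i | P i) (y i 0 - t) + t * \sum_(i | P i) 1.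
  by rewrite sumrB mulr_sumr; under [X in _ = _ + X]eq_bigr do rewrite mulr1; rewrite subrK.
rewrite /prefix_sum shift [X in _ <= X]shift lerD //.
- rewrite (bigID (fun i : 'I_n => (i < k'.+1)%N)) [X in _ <= X](bigID (mem A)) /=.
  rewrite (eq_bigl (fun i : 'I_n => (i < k'.+1)%N && (i \in A))) => [|i]; last exact: andbC.
  rewrite lerD // (@le_trans _ _ 0) //.
    by rewrite sumr_le0 // => i /andP[_ /below]; rewrite subr_le0.
  by rewrite sumr_ge0 // => i /andP[/above]; rewrite subr_ge0.
- have card_lt : #|(fun i : 'I_n => (i < k'.+1)%N)| = k'.+1.
    by rewrite -[RHS](card_ord_lt le_kn); apply: eq_card => i; rewrite inE.
  by rewrite !sumr_const cardA card_lt.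
Qed.

Lemma prefix_sum_le_topsum x t k : (k <= n)%N ->
  prefix_sum (row_perm t x) k <= topsum x k.
Proof.
move=> le_kn; have [s sorted_sx] := exists_sorting_permv x.
rewrite (topsum_sorted sorted_sx le_kn).
pose r := (t * s^-1)%g.
have -> : row_perm t x = row_perm r (row_perm s x) by rewrite -row_permM mulgKV.
set y := row_perm s x; set B := [set i : 'I_n | (i < k)%N].
have -> : prefix_sum (row_perm r y) k = \sum_(i in r @: B) y i 0.
  rewrite big_imset /=; last by move=> ? ? _ _; apply: perm_inj.
  by apply: eq_big => i; rewrite ?inE // => _; rewrite mxE.
by rewrite -[X in prefix_sum _ X](card_ord_lt le_kn) -(card_imset B (@perm_inj _ r)) sum_le_prefix_sum.
Qed.

End SortedSums.

Section RadoSorted.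
Variables (R : realFieldType) (n : nat) (x : 'cV[R]_n).
Hypothesis x_sorted : nonincreasing_vec x.
Implicit Types (v w : 'cV[R]_n) (s : 'S_n).

Definition perms v : 'cV[R]_n -> Prop := fun y => exists s, y = row_perm s v.

Definition mismatch v := [set i | v i 0 != x i 0].

Definition dominates v :=
  (forall k, (k <= n)%N -> prefix_sum x k <= prefix_sum v k) /\
  prefix_sum x n = prefix_sum v n.

Definition transfer v (j k : 'I_n) (d : R) : 'cV[R]_n :=
  \col_i (v i 0 - (if i == j then d else 0) + (if i == k then d else 0)).

Lemma prefix_sum_transfer v j k d m :
  prefix_sum (transfer v j k d) m =
  prefix_sum v m - (if (j < m)%N then d else 0) + (if (k < m)%N then d else 0).
Proof.
have sum_dirac (l : 'I_n) :
    \sum_(i < n | (i < m)%N) (if i == l then d else 0) = if (l < m)%N then d else 0.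
  rewrite -big_mkcondr /=; case: ifP => lt_lm.
    by rewrite (big_pred1 l) // => i /=; case: eqP => [->|]; rewrite ?lt_lm ?andbF.
  by rewrite big_pred0 // => i; case: eqP => [->|]; rewrite ?lt_lm ?andbF.
rewrite /prefix_sum; under eq_bigr do rewrite mxE.
by rewrite big_split sumrB /= !sum_dirac.
Qed.

(* Moving mass [d <= v j - v k] from coordinate [j] to [k] averages [v] with its
   image under the transposition of [j] and [k]. *)
Lemma transfer_conv_perms v j k d s : j != k -> v k 0 < v j 0 ->
  0 <= d <= v j 0 - v k 0 -> conv (perms v) (row_perm s (transfer v j k d)).
Proof.
move=> neq_jk lt_vkj /andP[d_ge0 d_le].
have gap_gt0 : 0 < v j 0 - v k 0 by rewrite subr_gt0.
have gap_neq0 : v j 0 - v k 0 != 0 by rewrite gt_eqF.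
pose t := 1 - d / (v j 0 - v k 0).
have -> : transfer v j k d = t *: v + (1 - t) *: row_perm (tperm j k) v.
  apply/matrixP => i c; rewrite ord1 !mxE /t.
  case: (eqVneq i j) => [->|neq_ij]; first by rewrite tpermL (negbTE neq_jk); field.
  case: (eqVneq i k) => [->|neq_ik]; first by rewrite tpermR; field.
  by rewrite tpermD 1?eq_sym //; ring.
rewrite !row_permE mulmxDr -!scalemxAr mulmxA -perm_mxM -!row_permE.
apply: conv_segment; [by exists s | by exists (s * tperm j k)%g|].
apply/andP; split; first by rewrite subr_ge0 ler_pdivrMr ?mul1r.
by rewrite lerBlDr lerDl divr_ge0 // ltW.
Qed.

Lemma exists_transfer_pair v : dominates v -> mismatch v != set0 ->
  exists j k : 'I_n, [/\ (j < k)%N, x j 0 < v j 0, v k 0 < x k 0,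
    forall i : 'I_n, (i < j)%N -> v i 0 = x i 0 &
    forall i : 'I_n, (i < k)%N -> x i 0 <= v i 0].
Proof.
move=> [dom_v sum_v] /set0Pn[i0]; rewrite inE => i0_mis.
case: (arg_minnP (P := fun i : 'I_n => v i 0 != x i 0) val i0_mis) => j j_mis j_min.
have eq_before (i : 'I_n) : (i < j)%N -> v i 0 = x i 0.
  by move=> lt_ij; apply/eqP; apply: contraTT lt_ij => /j_min; rewrite -leqNgt.
have lt_xvj : x j 0 < v j 0.
  have := dom_v j.+1 (ltn_ord j); rewrite !prefix_sumS.
  have -> : prefix_sum x j = prefix_sum v j by apply: eq_bigr => i /eq_before.
  by rewrite lerD2l lt_neqAle eq_sym j_mis.
have [k0 lt_vxk0] : exists k0, v k0 0 < x k0 0.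
  apply/existsP; apply: contraLR lt_xvj => /existsPn all_ge.
  have diff_ge0 i : 0 <= v i 0 - x i 0 by rewrite subr_ge0 leNgt all_ge.
  have : \sum_i (v i 0 - x i 0) = 0 by rewrite sumrB -!prefix_sum_n sum_v subrr.
  move/(psumr_eq0P (fun i _ => diff_ge0 i)) => /(_ j isT)/eqP.
  by rewrite subr_eq0 => /eqP ->; rewrite ltxx.
case: (arg_minnP (P := fun i : 'I_n => v i 0 < x i 0) val lt_vxk0) => k lt_vxk k_min.
exists j, k; split=> // [|i lt_ik]; last by rewrite leNgt; apply: contraL lt_ik => /k_min; rewrite -leqNgt.
rewrite ltnNge leq_eqVlt; apply/negP => /orP[/eqP/val_inj eq_kj|/eq_before eq_k].
  by move: lt_vxk; rewrite eq_kj ltNge (ltW lt_xvj).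
by move: lt_vxk; rewrite eq_k ltxx.
Qed.

Lemma robin_hood_step v : dominates v -> mismatch v != set0 ->
  exists2 w, dominates w /\ (#|mismatch w| < #|mismatch v|)%N &
    forall s, conv (perms v) (row_perm s w).
Proof.
move=> dom_v mis_v.
have [j [k [lt_jk lt_xvj lt_vxk eq_before ge_before]]] := exists_transfer_pair dom_v mis_v.
have [dom_le dom_eq] := dom_v.
have neq_jk : j != k by rewrite neq_ltn lt_jk.
have le_xkj : x k 0 <= x j 0 by apply: x_sorted; apply: ltnW.
pose d := Num.min (v j 0 - x j 0) (x k 0 - v k 0).
have d_gt0 : 0 < d by rewrite lt_min !subr_gt0 lt_xvj lt_vxk.
have d_le_j : d <= v j 0 - x j 0 by rewrite ge_min lexx.
have d_le_k : d <= x k 0 - v k 0 by rewrite ge_min lexx orbT.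
pose w := transfer v j k d.
have wE i : w i 0 = v i 0 - (if i == j then d else 0) + (if i == k then d else 0).
  by rewrite mxE.
exists w; last first.
  move=> s; apply: transfer_conv_perms => //; first by apply: (lt_le_trans lt_vxk); rewrite (le_trans le_xkj) // ltW.
  by rewrite (ltW d_gt0) (le_trans d_le_j) // lerD2l lerN2 (le_trans (ltW lt_vxk)).
split; first split.
- move=> m le_mn; rewrite prefix_sum_transfer.
  case: (ltnP k m) => [lt_km|le_mk].
    by rewrite !ifT ?(ltn_trans lt_jk) // subrK; apply: dom_le.
  rewrite addr0; case: (ltnP j m) => [lt_jm|le_mj]; last by rewrite subr0; apply: dom_le.
  rewrite lerBrDr -lerBrDl -sumrB (bigD1 j) //= -[d]addr0 lerD // sumr_ge0 // => i /andP[lt_im _].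
  by rewrite subr_ge0 ge_before // (leq_trans lt_im).
- by rewrite prefix_sum_transfer !ifT ?(ltn_trans lt_jk) ?ltn_ord // subrK.
have [l l_mis w_l] : exists2 l, l \in mismatch v & w l 0 = x l 0.
  case: (leP (v j 0 - x j 0) (x k 0 - v k 0)) => [le_jk|lt_kj].
    exists j; first by rewrite inE gt_eqF.
    by rewrite wE eqxx (negbTE neq_jk) addr0 /d (min_idPl le_jk) opprB addrCA subrr addr0.
  exists k; first by rewrite inE lt_eqF.
  by rewrite wE eqxx eq_sym (negbTE neq_jk) subr0 /d (min_idPr (ltW lt_kj)) addrCA subrr addr0.
rewrite [#|mismatch v|](cardsD1 l) l_mis add1n ltnS; apply: subset_leq_card; apply/subsetP => i.
rewrite !inE => w_i; apply/andP; split; first by apply: contraNneq w_i => ->; rewrite w_l.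
rewrite wE in w_i; case: (eqVneq i k) => [-> |neq_ik]; first by rewrite lt_eqF.
case: (eqVneq i j) => [-> |neq_ij]; first by rewrite gt_eqF.
by move: w_i; rewrite (negbTE neq_ij) (negbTE neq_ik) addr0 subr0.
Qed.

Lemma mismatch_eq0 v : mismatch v = set0 -> v = x.
Proof.
move=> no_mis; apply/matrixP => i c; rewrite ord1; apply/eqP; apply: contraT => mis_i.
by have := in_set0 i; rewrite -no_mis inE mis_i.
Qed.

Lemma rado_sorted v : dominates v -> conv (perms v) x.
Proof.
move: {2}#|mismatch v| (leqnn #|mismatch v|) => N.
elim: N v => [|N IH] v le_mis dom_v.
  have -> : v = x by apply: mismatch_eq0; apply/eqP; rewrite -cards_eq0 -leqn0.
  by apply: conv_mem; exists 1%g; rewrite row_perm1.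
have [/mismatch_eq0 -> | mis_v] := eqVneq (mismatch v) set0.
  by apply: conv_mem; exists 1%g; rewrite row_perm1.
have [w [dom_w lt_mis] w_in] := robin_hood_step dom_v mis_v.
apply: conv_idem; apply: (conv_mono (S := perms w)) => [_ [s ->]|]; first exact: w_in.
by apply: IH dom_w; rewrite -ltnS (leq_trans lt_mis).
Qed.

End RadoSorted.

Lemma rado (R : realFieldType) n (u y : 'cV[R]_n) :
  nonincreasing_vec u -> majorizes u y -> conv (perms u) y.
Proof.
move=> sorted_u [maj_le maj_eq].
have [s sorted_sy] := exists_sorting_permv y.
have dom_u : dominates (row_perm s y) u.
  have top_u k : (k <= n)%N -> topsum u k = prefix_sum u k.
    exact: topsum_nonincreasing.
  have top_y k : (k <= n)%N -> topsum y k = prefix_sum (row_perm s y) k.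
    exact: topsum_sorted.
  split=> [k le_kn|]; last by rewrite -(top_u _ (leqnn n)) -(top_y _ (leqnn n)) maj_eq.
  rewrite -(top_u _ le_kn) -(top_y _ le_kn).
  by case: ltngtP le_kn => // [lt_kn _ | -> _]; [apply: maj_le | rewrite maj_eq].
have -> : y = row_perm s^-1 (row_perm s y) by rewrite -row_permM mulVg row_perm1.
apply: (conv_image (f := row_perm s^-1)) (rado_sorted sorted_sy dom_u) => [? ?|c ?|_ [t ->]].
- exact: linearD.
- exact: linearZ.
- by exists (s^-1 * t)%g; rewrite row_permM.
Qed.

Definition asbool (P : Prop) : bool := if excluded_middle_informative P then true else false.

Lemma asboolP (P : Prop) : reflect P (asbool P).
Proof. by rewrite /asbool; case: excluded_middle_informative => h; constructor. Qed.

Section FaceSorting.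
Variables (R : realFieldType) (n : nat) (a b : R) (F : 'cV[R]_n -> Prop).

Lemma perm_face_coordE (s : 'S_n) (G : 'cV[R]_n -> Prop) (c : R) (j : 'I_n) :
  (forall y, G y <-> exists x, F x /\ y = perm_mx s *m x) ->
  (forall y, G y -> y j 0 = c) <-> (forall x, F x -> x (s j) 0 = c).
Proof.
move=> G_img; split=> G_c x.
  move=> F_x; have := G_c (perm_mx s *m x); rewrite -row_permE mxE; apply.
  by apply/G_img; exists x; rewrite row_permE.
by move=> /G_img[x' [F_x' ->]]; rewrite -row_permE mxE; apply: G_c.
Qed.

Variable x0 : 'cV[R]_n.
Hypotheses (lt_ab : a < b) (box_x0 : box a b x0) (F_x0 : F x0).

Definition coord_class (i : 'I_n) : nat :=
  if asbool (uset b F i) then 2 else if asbool (lset a F i) then 0 else 1.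

Lemma coord_class_le2 i : (coord_class i <= 2)%N.
Proof. by rewrite /coord_class; case: asbool => //; case: asbool. Qed.

Lemma coord_class2 i : (coord_class i == 2)%N = asbool (uset b F i).
Proof. by rewrite /coord_class; case: asboolP => //; case: asbool. Qed.

Lemma coord_class0 i : (coord_class i == 0)%N = asbool (lset a F i).
Proof.
rewrite /coord_class; case: asboolP => [u_i|_]; last by case: asbool.
by case: asboolP => // l_i; move: lt_ab; rewrite -(u_i _ F_x0) -(l_i _ F_x0) ltxx.
Qed.

(* Weighting the class by [D > b - a] makes it the primary sort key. *)
Lemma exists_class_sorting_perm : exists s : 'S_n,
  nonincreasing_vec (row_perm s x0) /\
  forall i j : 'I_n, (i <= j)%N -> (coord_class (s j) <= coord_class (s i))%N.
Proof.
pose D := b - a + 1.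
have D_ge0 : 0 <= D by rewrite /D addr_ge0 // subr_ge0 ltW.
have [s s_sorts] := exists_sorting_perm (fun i => x0 i 0 + (coord_class i)%:R * D).
have class_sorted (i j : 'I_n) : (i <= j)%N -> (coord_class (s j) <= coord_class (s i))%N.
  move=> le_ij; rewrite leqNgt; apply/negP => lt_class.
  have gapD : ((coord_class (s i))%:R + 1) * D <= (coord_class (s j))%:R * D.
    by apply: ler_wpM2r => //; rewrite natr1 ler_nat.
  have := s_sorts _ _ le_ij; have := box_x0 (s i); have := box_x0 (s j).
  by move=> /andP[? ?] /andP[? ?]; rewrite /D in gapD *; nra.
exists s; split=> // i j le_ij; rewrite !mxE.
case: (ltngtP (coord_class (s j)) (coord_class (s i))) (class_sorted _ _ le_ij) => // [lt_class _|eq_class _].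
  have := box_x0 (s i); have := box_x0 (s j); move=> /andP[? ?] /andP[? ?].
  case: (boolP (coord_class (s i) == 2)%N) => [|ne2].
    by rewrite coord_class2 => /asboolP u_i; rewrite (u_i _ F_x0).
  have : (coord_class (s j) == 0)%N by move: lt_class ne2 (coord_class_le2 (s i)); lia.
  by rewrite coord_class0 => /asboolP l_j; rewrite (l_j _ F_x0).
by have := s_sorts _ _ le_ij; rewrite eq_class lerD2r.
Qed.

Lemma in_I_perm_face (s : 'S_n) (G : 'cV[R]_n -> Prop) :
  (forall i j : 'I_n, (i <= j)%N -> (coord_class (s j) <= coord_class (s i))%N) ->
  (forall y, G y <-> exists x, F x /\ y = perm_mx s *m x) -> in_I a b G.
Proof.
move=> class_sorted G_img.
pose U := [set j : 'I_n | coord_class (s j) == 2]%N.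
pose L := [set j : 'I_n | coord_class (s j) != 0]%N.
have U_mem j : (j \in U) = (j < #|U|)%N.
  apply: mem_downclosed => i k le_ik; rewrite !inE.
  by have := class_sorted _ _ le_ik; have := coord_class_le2 (s i); lia.
have L_mem j : (j \in L) = (j < #|L|)%N.
  apply: mem_downclosed => i k le_ik; rewrite !inE.
  by have := class_sorted _ _ le_ik; lia.
have le_UL : (#|U| <= #|L|)%N.
  by apply: subset_leq_card; apply/subsetP => j; rewrite !inE => /eqP->.
have le_Ln : (#|L| <= n)%N by rewrite -[n in (_ <= n)%N]card_ord max_card.
exists #|U|, #|L|.+1; split; [by rewrite ltnS | split; [by [] | split=> j]].
- rewrite /uset; apply: iff_trans (perm_face_coordE _ _ G_img) _.
  by rewrite -U_mem inE coord_class2; apply: rwP; apply: asboolP.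
- rewrite /lset; apply: iff_trans (perm_face_coordE _ _ G_img) _.
  by rewrite ltnS leqNgt -L_mem inE negbK coord_class0; apply: rwP; apply: asboolP.
Qed.

End FaceSorting.

Section MajorizationHull.
Variables (R : realFieldType) (n : nat) (K : finType) (lam : K -> R).
Hypothesis lam_ge0 : forall k, 0 <= lam k.

Lemma nonincreasing_vec_comb (w : K -> 'cV[R]_n) :
  (forall k, nonincreasing_vec (w k)) -> nonincreasing_vec (\sum_k lam k *: w k).
Proof.
move=> w_sorted i j le_ij; rewrite !summxE; apply: ler_sum => k _.
by rewrite !mxE ler_wpM2l // w_sorted.
Qed.

Lemma majorizes_comb (s : K -> 'S_n) (y : K -> 'cV[R]_n) :
  (forall k, nonincreasing_vec (row_perm (s k) (y k))) ->
  majorizes (\sum_k lam k *: row_perm (s k) (y k)) (\sum_k lam k *: y k).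
Proof.
move=> sorted_sy; set u := \sum_k _; set x := \sum_k _.
have [t sorted_tx] := exists_sorting_permv x.
have tx_comb : row_perm t x = \sum_k lam k *: row_perm t (y k).
  by rewrite row_permE mulmx_sumr; apply: eq_bigr => k _; rewrite -scalemxAr -row_permE.
split=> [j lt_jn|]; last first.
  rewrite !topsum_n -!prefix_sum_n !prefix_sum_lin; apply: eq_bigr => k _.
  by rewrite !prefix_sum_n sum_row_perm.
have le_jn := ltnW lt_jn.
rewrite (topsum_sorted sorted_tx le_jn) (topsum_nonincreasing (nonincreasing_vec_comb sorted_sy) le_jn).
rewrite tx_comb !prefix_sum_lin; apply: ler_sum => k _; rewrite ler_wpM2l //.
by rewrite -(topsum_sorted (sorted_sy k) le_jn) prefix_sum_le_topsum.
Qed.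

End MajorizationHull.

Section PermutationInvariantHull.
Variables (R : realFieldType) (n m r : nat) (a b : R).
Variables (Z : 'cV[R]_n * 'cV[R]_m -> Prop) (Fs : 'I_r -> 'cV[R]_n -> Prop).
Hypotheses (lt_ab : a < b) (Z_perm : perm_inv_Z Z) (Fs_perm : perm_inv_faces Fs).

Definition XI : 'cV[R]_n * 'cV[R]_m -> Prop :=
  fun p => exists i, in_I a b (Fs i) /\ Xset Z a b (fun _ : 'I_1 => Fs i) p.

Lemma Xset_row_perm (s : 'S_n) p :
  Xset Z a b Fs p -> Xset Z a b Fs (row_perm s p.1, p.2).
Proof.
move=> [box_p Z_p [i Fs_i]]; split=> /= [j||].
- by rewrite mxE; apply: box_p.
- by rewrite row_permE; apply: Z_perm; rewrite ?perm_mx_is_perm -?surjective_pairing.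
- have [k Fs_k] := Fs_perm i (perm_mx_is_perm R s).
  by exists k; apply/Fs_k; exists p.1; rewrite row_permE.
Qed.

Lemma Xset_sorted p : Xset Z a b Fs p ->
  exists s : 'S_n, nonincreasing_vec (row_perm s p.1) /\ XI (row_perm s p.1, p.2).
Proof.
move=> Xp; have [box_p _ [i Fs_i]] := Xp.
have [s [sorted_sp class_sorted]] := exists_class_sorting_perm lt_ab box_p Fs_i.
have [k Fs_k] := Fs_perm i (perm_mx_is_perm R s).
exists s; split=> //; exists k; split; first exact: (in_I_perm_face lt_ab Fs_i class_sorted Fs_k).
have [box_sp Z_sp _] := Xset_row_perm s Xp.
by split=> //; exists ord0; apply/Fs_k; exists p.1; rewrite row_permE.
Qed.

Lemma conv_XI_perm (s : 'S_n) u z : conv XI (u, z) -> conv (Xset Z a b Fs) (row_perm s u, z).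
Proof.
apply: (conv_image (f := fun p => (row_perm s p.1, p.2))) => [p q|c p|p [i [_ XI_p]]] /=.
- by rewrite linearD.
- by rewrite linearZ.
- apply: Xset_row_perm; have [box_p Z_p _] := XI_p.
  by split=> //; exists i; case: XI_p => _ _ [].
Qed.

End PermutationInvariantHull.

Unset Implicit Arguments.
Set Strict Implicit.

Theorem mainTheorem15 (R : realFieldType) (n m : nat) (a b : R)
    (Z : 'cV[R]_n * 'cV[R]_m -> Prop) (r : nat)
    (Fs : 'I_r -> ('cV[R]_n -> Prop)) :
  a < b ->
  perm_inv_Z Z ->
  (forall i, is_face a b (Fs i)) ->
  perm_inv_faces Fs ->
  forall (x : 'cV[R]_n) (z : 'cV[R]_m),
    conv (Xset Z a b Fs) (x, z) <->
    exists u : 'cV[R]_n,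
      [/\ conv (fun p => exists i : 'I_r,
                   in_I a b (Fs i) /\ Xset Z a b (fun _ : 'I_1 => Fs i) p)
               (u, z),
          nonincreasing_vec u &
          majorizes u x].
Proof.
(* Being a face is never used: only the index sets l(F) and u(F) matter. *)
move=> lt_ab Z_perm _ Fs_perm x z; split.
- move=> [K [lam [p [lam_ge0 lam_sum1 Xp]]]]; rewrite sum_pair => -[-> ->].
  have [s s_sorts] := fin_all_exists (fun k => Xset_sorted lt_ab Z_perm Fs_perm (Xp k)).
  exists (\sum_k lam k *: row_perm (s k) (p k).1); split.
  + have -> : (\sum_k lam k *: row_perm (s k) (p k).1, \sum_k lam k *: (p k).2) =
              \sum_k lam k *: (row_perm (s k) (p k).1, (p k).2) by rewrite sum_pair.
    by apply: conv_sum => // k; case: (s_sorts k).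
  + by apply: nonincreasing_vec_comb => // k; case: (s_sorts k).
  + by apply: majorizes_comb => // k; case: (s_sorts k).
- move=> [u [conv_u sorted_u maj_ux]].
  have [K [mu [ys [mu_ge0 mu_sum1 ys_perm ->]]]] := rado sorted_u maj_ux.
  have -> : (\sum_k mu k *: ys k, z) = \sum_k mu k *: (ys k, z).
    by rewrite sum_pair /= -scaler_suml mu_sum1 scale1r.
  apply: conv_idem; apply: conv_sum => // k.
  by have [s ->] := ys_perm k; apply: conv_XI_perm.
Qed.
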